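(* Let $R:\mathcal X\times\mathcal X\to\mathcal X\times\mathcal X$ be a pentagon map. Then for every $n>1$, $i,l\in\{1,\dots,n\}$ and $k\in\{1,\dots,n-l+1\}$, the map ${}^{(n)}T^{i,k,l}:\mathcal X^n\times\mathcal X^n\to\mathcal X^n\times\mathcal X^n$ is a pentagon map, i.e. $$T_{23}\circ T_{12}=T_{12}\circ T_{13}\circ T_{23}$$ as maps on $\mathcal X^{3n}$.
   Context: Pentagon map: for a set $Y$ and $S:Y\times Y\to Y\times Y$, with $S_{12}=S\times\mathrm{id}_Y$, $S_{23}=\mathrm{id}_Y\times S$, $S_{13}(y_1,y_2,y_3)=(p,y_2,q)$ where $(p,q)=S(y_1,y_3)$, one requires $S_{12}\circ S_{13}\circ S_{23}=S_{23}\circ S_{12}$ (rightmost applied first). For an integer $m$ and $b\in\{1,2,3\}$ let $[m]_b$ be the unique element of $\{(b-1)n+1,\dots,bn\}$ congruent to $m$ mod $n$. For positions $p\neq q$ of $\mathcal X^N$, $R_{p,q}$ acts as $R$ on components $(p,q)$ and identically elsewhere; $\circ_{j=1}^k f^j:=f^1\circ\cdots\circ f^k$. On $\mathcal X^{2n}$: ${}^{(n)}t^{i,k,m}=\circ_{j=1}^{k}R_{[i+k+m-1]_1,[i+n+j-1]_2}$ and ${}^{(n)}T^{i,k,l}={}^{(n)}t^{i,k,0}\circ\cdots\circ{}^{(n)}t^{i,k,l-1}$. On $\mathcal X^{3n}$: $t^{m}_{12}=\circ_{j=1}^{k}R_{[i+k+m-1]_1,[i+n+j-1]_2}$, $t^{m}_{13}=\circ_{j=1}^{k}R_{[i+k+m-1]_1,[i+2n+j-1]_3}$,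 $t^{m}_{23}=\circ_{j=1}^{k}R_{[i+n+k+m-1]_2,[i+2n+j-1]_3}$, and $T_{st}=t^{0}_{st}\circ\cdots\circ t^{l-1}_{st}$; these coincide with $({}^{(n)}T^{i,k,l})_{12},({}^{(n)}T^{i,k,l})_{13},({}^{(n)}T^{i,k,l})_{23}$ in the sense of the pentagon-map definition with $Y=\mathcal X^n$. *)

From mathcomp Require Import all_boot.
Set Implicit Arguments. Unset Strict Implicit. Unset Printing Implicit Defensive.

Section Pentagon.
Variable Y : Type.
Variable S : Y * Y -> Y * Y.

Definition S12 (y : Y * Y * Y) : Y * Y * Y :=
  let: (y1, y2, y3) := y in let: (a, b) := S (y1, y2) in (a, b, y3).
Definition S23 (y : Y * Y * Y) : Y * Y * Y :=
  let: (y1, y2, y3) := y in let: (a, b) := S (y2, y3) in (y1, a, b).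
Definition S13 (y : Y * Y * Y) : Y * Y * Y :=
  let: (y1, y2, y3) := y in let: (p, q) := S (y1, y3) in (p, y2, q).

Definition pentagon_map : Prop :=
  forall y : Y * Y * Y, S12 (S13 (S23 y)) = S23 (S12 y).
End Pentagon.

(* X^N is represented by {ffun 'I_N -> X}; position p in {1,...,N}
   (1-based, as in the paper) is the ordinal p.-1. *)
Section Positions.
Variable X : Type.
Variable R : X * X -> X * X.

(* R_{p,q}: acts as R on components (p,q), identically elsewhere.
   (If p or q is out of range it is the identity; this never occurs below.) *)
Definition Rpq (N p q : nat) (x : {ffun 'I_N -> X}) : {ffun 'I_N -> X} :=
  match (insub p.-1 : option 'I_N), (insub q.-1 : option 'I_N) with
  | Some op, Some oq =>
      let r := R (x op, x oq) in
      [ffun j => if j == op then r.1 else if j == oq then r.2 else x j]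
  | _, _ => x
  end.
End Positions.

(* [m]_b : the unique element of {(b-1)n+1, ..., bn} congruent to m mod n *)
Definition brk (n m b : nat) : nat := (b - 1) * n + ((m - 1) %% n) + 1.

Definition circ_from {A : Type} (s : seq nat) (f : nat -> A -> A) : A -> A :=
  foldr (fun j g => f j \o g) id s.

Section Tmaps.
Variable X : Type.
Variable R : X * X -> X * X.
Variables n i k l : nat.

Definition t12 (m : nat) : {ffun 'I_(3 * n) -> X} -> {ffun 'I_(3 * n) -> X} :=
  circ_from (iota 1 k) (fun j =>
    Rpq R (brk n (i + k + m - 1) 1) (brk n (i + n + j - 1) 2)).
Definition t13 (m : nat) : {ffun 'I_(3 * n) -> X} -> {ffun 'I_(3 * n) -> X} :=
  circ_from (iota 1 k) (fun j =>
    Rpq R (brk n (i + k + m - 1) 1) (brk n (i + 2 * n + j - 1) 3)).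
Definition t23 (m : nat) : {ffun 'I_(3 * n) -> X} -> {ffun 'I_(3 * n) -> X} :=
  circ_from (iota 1 k) (fun j =>
    Rpq R (brk n (i + n + k + m - 1) 2) (brk n (i + 2 * n + j - 1) 3)).

Definition T12 := circ_from (iota 0 l) (fun m => t12 m).
Definition T13 := circ_from (iota 0 l) (fun m => t13 m).
Definition T23 := circ_from (iota 0 l) (fun m => t23 m).
End Tmaps.
Arguments t12 [X] R n i k m _.
Arguments t13 [X] R n i k m _.
Arguments t23 [X] R n i k m _.
Arguments T12 [X] R n i k l _.
Arguments T13 [X] R n i k l _.
Arguments T23 [X] R n i k l _.

(** Write [G p z] for [R] acting on positions [p] and [z] of [X^(3n)], and
    [grid ps zs] for the composite of the [G p z] taken row by row.  The
    positions used by the three maps are windows of cyclically consecutive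
    positions: [xs] in the first copy of [X^n], [ys ++ q :: qs] in the second
    and [zs] in the third, with [T12 = grid xs (rcons ys q)],
    [T13 = grid xs zs] and [T23 = grid (q :: qs) zs].  Since [k + l - 1 <= n],
    all these positions are distinct.  Only two local relations are then
    needed: maps [G] on disjoint pairs of positions commute, and
    [G p q \o G p r \o G q r = G q r \o G p q] for distinct [p, q, r], which
    is the pentagon equation for [R].  Each time the row of [q] is pushed past
    a factor [G p q], the local pentagon relation leaves a row of factors
    [G p z] behind; sweeping it through all rows of [T12] produces [T13]. *)

From mathcomp Require Import all_boot zify.
Set Implicit Arguments. Unset Strict Implicit. Unset Printing Implicit Defensive.

Definition commuting (A : Type) (f g : A -> A) := forall x, f (g x) = g (f x).

Lemma commuting_sym A (f g : A -> A) : commuting f g -> commuting g f.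
Proof. by move=> fg x; rewrite fg. Qed.

Lemma circ_from_cons A a s (f : nat -> A -> A) x :
  circ_from (a :: s) f x = f a (circ_from s f x).
Proof. by []. Qed.

Lemma circ_from_rcons A s a (f : nat -> A -> A) x :
  circ_from (rcons s a) f x = circ_from s f (f a x).
Proof. by elim: s => //= b s ->. Qed.

Lemma commuting_circ_from A (h : A -> A) (s : seq nat) (f : nat -> A -> A) :
  (forall a, a \in s -> commuting h (f a)) -> commuting h (circ_from s f).
Proof.
elim: s => [|a s IH] hf x //.
rewrite !circ_from_cons -IH; last by move=> b bs; apply: hf; rewrite in_cons bs orbT.
by rewrite hf ?mem_head.
Qed.

Section Grids.
Variables (F : Type) (ok : pred nat) (G : nat -> nat -> F -> F).

Definition row p zs : F -> F := circ_from zs (G p).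
Definition grid ps zs : F -> F := circ_from ps (row ^~ zs).

Lemma grid_map (f g : nat -> nat) s t :
  grid (map f s) (map g t) = circ_from s (fun m => circ_from t (fun j => G (f m) (g j))).
Proof.
rewrite /grid /row /circ_from foldr_map.
by elim: s => //= m s ->; rewrite foldr_map.
Qed.

Lemma grid_cons p ps zs x : grid (p :: ps) zs x = row p zs (grid ps zs x).
Proof. by []. Qed.

Lemma row_rcons p ys q x : row p (rcons ys q) x = row p ys (G p q x).
Proof. exact: circ_from_rcons. Qed.

Hypothesis G_commute : forall p q r s, ok p -> ok q -> ok r -> ok s ->
  p != r -> p != s -> q != r -> q != s -> commuting (G p q) (G r s).
Hypothesis G_pentagon : forall p q r, ok p -> ok q -> ok r -> uniq [:: p; q; r] ->
  forall x, G p q (G p r (G q r x)) = G q r (G p q x).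

Lemma commuting_grid ps zs qs ws :
  {subset ps ++ zs <= ok} -> {subset qs ++ ws <= ok} ->
  ~~ has (mem (ps ++ zs)) (qs ++ ws) -> commuting (grid ps zs) (grid qs ws).
Proof.
move=> okA okB /hasPn disj.
have neq a b : a \in ps ++ zs -> b \in qs ++ ws -> a != b.
  by move=> aA bB; apply: contraNneq (disj b bB) => <-.
apply: commuting_circ_from => r r_qs; apply: commuting_circ_from => w w_ws.
apply: commuting_sym; apply: commuting_circ_from => p p_ps.
apply: commuting_circ_from => z z_zs.
have [p_A z_A] : p \in ps ++ zs /\ z \in ps ++ zs by rewrite !mem_cat p_ps z_zs orbT.
have [r_B w_B] : r \in qs ++ ws /\ w \in qs ++ ws by rewrite !mem_cat r_qs w_ws orbT.
by apply: G_commute; [exact: okB | exact: okB | exact: okA | exact: okA | ..];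
  rewrite eq_sym neq.
Qed.

Lemma commuting_row p ys q zs :
  {subset p :: ys <= ok} -> {subset q :: zs <= ok} ->
  ~~ has (mem (p :: ys)) (q :: zs) -> commuting (row p ys) (row q zs).
Proof. by move=> okl okr disj x; apply: (commuting_grid (ps := [:: p]) (qs := [:: q])). Qed.

Lemma row_sweep p q zs : {subset [:: p, q & zs] <= ok} -> uniq [:: p, q & zs] ->
  forall x, row q zs (G p q x) = G p q (row p zs (row q zs x)).
Proof.
elim: zs => [|z zs IH] okL uL x //.
have sub := cat_subseq (subseq_refl [:: p; q]) (subseq_cons zs z).
have okL' a : a \in [:: p, q & zs] -> ok a by move/(mem_subseq sub)/okL.
rewrite /row !circ_from_cons -!/(row _ _) IH ?(subseq_uniq sub) //.
move: uL; rewrite /= !inE !negb_or.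
move=> /and3P[/and3P[pq pz pzs] /andP[qz qzs] /andP[zzs _]].
have [okp okq okz] : [/\ ok p, ok q & ok z].
  by split; apply: okL; rewrite !inE eqxx ?orbT.
rewrite -G_pentagon //=; last by rewrite !inE !negb_or pq pz qz.
congr (G p q (G p z _)).
apply: commuting_circ_from => w wzs.
apply: G_commute; rewrite 1?eq_sym //; first by apply: okL'; rewrite !inE wzs !orbT.
- by apply: contraNneq qzs => <-.
- by apply: contraNneq zzs => <-.
Qed.

Lemma row_rcons_sweep p q ys zs :
  {subset (p :: ys) ++ q :: zs <= ok} -> uniq ((p :: ys) ++ q :: zs) ->
  forall x, row q zs (row p (rcons ys q) x) = row p (rcons ys q) (row p zs (row q zs x)).
Proof.
move=> okL uL x.
have sub : subseq [:: p, q & zs] ((p :: ys) ++ q :: zs) by rewrite /= eqxx suffix_subseq.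
have [okl okr] : {subset p :: ys <= ok} /\ {subset q :: zs <= ok}.
  by split=> a a_s; apply: okL; rewrite mem_cat a_s ?orbT.
move: (uL); rewrite cat_uniq => /and3P[_ disj _].
rewrite !row_rcons -commuting_row // row_sweep //; last exact: subseq_uniq uL.
by move=> a /(mem_subseq sub)/okL.
Qed.

Lemma row_grid_sweep q xs ys zs :
  {subset xs ++ ys ++ q :: zs <= ok} -> uniq (xs ++ ys ++ q :: zs) ->
  forall x, row q zs (grid xs (rcons ys q) x) =
            grid xs (rcons ys q) (grid xs zs (row q zs x)).
Proof.
elim: xs => [|a xs IH] okL uL x; first by [].
have sub_xs := subseq_cons (xs ++ ys ++ q :: zs) a.
have sub_a := cat_subseq (subseq_refl [:: a]) (suffix_subseq xs (ys ++ q :: zs)).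
rewrite !grid_cons row_rcons_sweep; first last.
- exact: subseq_uniq uL.
- by move=> b /(mem_subseq sub_a)/okL.
rewrite IH; first last.
- exact: subseq_uniq uL.
- by move=> b /(mem_subseq sub_xs)/okL.
congr (row a _ _).
have P : perm_eq ((a :: zs) ++ xs ++ rcons ys q) (a :: xs ++ ys ++ q :: zs).
  by rewrite /= perm_cons -cat_rcons perm_catC catA.
have okP : {subset (a :: zs) ++ xs ++ rcons ys q <= ok}.
  by move=> b; rewrite (perm_mem P); apply: okL.
move: uL; rewrite -(perm_uniq P) cat_uniq => /and3P[_ disj _].
by apply: (commuting_grid (ps := [:: a])) => // b b_s; apply: okP; rewrite mem_cat b_s ?orbT.
Qed.

Lemma grid_pentagon xs ys q qs zs :
  {subset xs ++ (ys ++ q :: qs) ++ zs <= ok} -> uniq (xs ++ (ys ++ q :: qs) ++ zs) ->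
  forall x, grid (q :: qs) zs (grid xs (rcons ys q) x) =
            grid xs (rcons ys q) (grid xs zs (grid (q :: qs) zs x)).
Proof.
move=> okL uL x.
have E : xs ++ (ys ++ q :: qs) ++ zs = (xs ++ rcons ys q) ++ qs ++ zs.
  by rewrite -!catA cat_rcons.
have sub : subseq (xs ++ ys ++ q :: zs) (xs ++ (ys ++ q :: qs) ++ zs).
  by rewrite -catA !cat_subseq // /= eqxx suffix_subseq.
rewrite !grid_cons -row_grid_sweep; first last.
- exact: subseq_uniq uL.
- by move=> b /(mem_subseq sub)/okL.
move: uL; rewrite E cat_uniq => /and3P[_ disj _].
congr (row q zs _); symmetry.
by apply: commuting_grid => // b b_s; apply: okL; rewrite E mem_cat b_s ?orbT.
Qed.
End Grids.

Section RpqRelations.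
Variables (X : Type) (R : X * X -> X * X) (N : nat).

Lemma Rpq_ord (op oq : 'I_N) x :
  Rpq R op.+1 oq.+1 x =
  [ffun j => if j == op then (R (x op, x oq)).1
             else if j == oq then (R (x op, x oq)).2 else x j].
Proof. by rewrite /Rpq /= !valK. Qed.

Lemma pos_ord p : 0 < p <= N -> exists o : 'I_N, p = o.+1.
Proof. by case: p => // p pN; exists (Ordinal pN). Qed.

Lemma eqSS_ord (a b : 'I_N) : (a.+1 == b.+1) = (a == b).
Proof. by []. Qed.

Lemma Rpq_commute p q r s : 0 < p <= N -> 0 < q <= N -> 0 < r <= N -> 0 < s <= N ->
  p != r -> p != s -> q != r -> q != s -> commuting (@Rpq X R N p q) (@Rpq X R N r s).
Proof.
move=> /pos_ord[op ->] /pos_ord[oq ->] /pos_ord[or ->] /pos_ord[os ->].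
rewrite !eqSS_ord => /negbTE pr /negbTE ps /negbTE qr /negbTE qs x.
have [rp sp rq sq] : [/\ (or == op) = false, (os == op) = false,
                         (or == oq) = false & (os == oq) = false].
  by rewrite !(eq_sym _ op) !(eq_sym _ oq).
apply/ffunP => j; rewrite !Rpq_ord !ffunE pr ps qr qs rp sp rq sq.
case: (eqVneq j op) => [->|/negbTE jp]; rewrite ?pr ?ps //.
by case: (eqVneq j oq) => [->|/negbTE jq]; rewrite ?qr ?qs ?jp.
Qed.

Lemma Rpq_pentagon : pentagon_map R -> forall p q r,
  0 < p <= N -> 0 < q <= N -> 0 < r <= N -> uniq [:: p; q; r] ->
  forall x, @Rpq X R N p q (Rpq R p r (Rpq R q r x)) = Rpq R q r (Rpq R p q x).
Proof.
move=> pentR p q r /pos_ord[op ->] /pos_ord[oq ->] /pos_ord[or ->].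
rewrite /= !inE !negb_or !eqSS_ord andbT => /andP[/andP[pq pr] qr] x.
have [qp rp rq] : [/\ (oq == op) = false, (or == op) = false & (or == oq) = false].
  by split; apply/negbTE; rewrite eq_sym.
apply/ffunP => j.
rewrite !Rpq_ord !ffunE !eqxx (negbTE pq) (negbTE pr) (negbTE qr) qp rp rq /=.
move: (pentR (x op, x oq, x or)); rewrite /S12 /S13 /S23.
case: (R (x oq, x or)) => [a1 b1]; case: (R (x op, b1)) => [a2 b2] /=.
case: (R (a2, a1)) => [a3 b3]; case: (R (x op, x oq)) => [c1 d1] /=.
case: (R (d1, x or)) => [c2 d2] [-> -> ->].
case: (eqVneq j op) => [->|/negbTE jp];
  rewrite ?eqxx ?qp ?rp ?(negbTE pq) ?(negbTE pr) ?jp //.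
by case: (j == oq); case: (j == or).
Qed.
End RpqRelations.

Lemma brk_block n m b : 0 < n -> 0 < b -> (b - 1) * n < brk n m b <= b * n.
Proof. by move=> n0 b0; rewrite /brk; have := ltn_pmod (m - 1) n0; nia. Qed.

Lemma brk_inj n b m1 m2 : 0 < m1 -> 0 < m2 -> m1 < m2 + n -> m2 < m1 + n ->
  brk n m1 b = brk n m2 b -> m1 = m2.
Proof.
wlog le12 : m1 m2 / m1 <= m2 => [hyp|m1_0 _ _ lt21].
  by case: (leqP m1 m2) => [|/ltnW] le ? ? ? ? E; [|symmetry]; apply: hyp.
rewrite /brk => /addIn/addnI; rewrite -(subnKC le12) -addnBAC // => /eqP.
rewrite -{1}[m1 - 1]addn0 eqn_modDl mod0n modn_small; lia.
Qed.

Definition window n b a w := [seq brk n m b | m <- iota a w].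

Lemma window_cons n b a w : window n b a w.+1 = brk n a b :: window n b a.+1 w.
Proof. by []. Qed.

Lemma window_cat n b a w1 w2 :
  window n b a (w1 + w2) = window n b a w1 ++ window n b (a + w1) w2.
Proof. by rewrite /window iotaD map_cat. Qed.

Lemma window_rcons n b a w : window n b a w.+1 = rcons (window n b a w) (brk n (a + w) b).
Proof. by rewrite -addn1 window_cat cats1. Qed.

Lemma window_cat_cons n b a w1 w2 :
  window n b a w1 ++ brk n (a + w1) b :: window n b (a + w1).+1 w2 = window n b a (w1 + w2.+1).
Proof. by rewrite window_cat. Qed.

Lemma window_shift n b c a a' w : c + a = a'.+1 ->
  [seq brk n (c + m - 1) b | m <- iota a w] = window n b a' w.
Proof.
move=> E; rewrite /window -[a]addn0 -[a']addn0 !iotaDl -!map_comp.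
by apply: eq_map => m /=; congr brk; lia.
Qed.

Lemma uniq_window n b a w : 0 < a -> w <= n -> uniq (window n b a w).
Proof.
move=> a0 wn; rewrite map_inj_in_uniq ?iota_uniq // => m1 m2.
rewrite !mem_iota => /andP[m1a m1w] /andP[m2a m2w]; apply: brk_inj; lia.
Qed.

Lemma mem_window n b a w p : p \in window n b a w -> 0 < n -> 0 < b ->
  (b - 1) * n < p <= b * n.
Proof. by move=> /mapP[m _ ->]; apply: brk_block. Qed.

Lemma uniq_cat_sep (s t : seq nat) c :
  {in s, forall p, p <= c} -> {in t, forall p, c < p} -> uniq (s ++ t) = uniq s && uniq t.
Proof.
move=> sc tc; rewrite cat_uniq (_ : has _ _ = false) //.
by apply/hasPn => p pt; apply/negP => ps; have := sc p ps; have := tc p pt; lia.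
Qed.

Section ThreeBlocks.
Variables (n a1 w1 a2 w2 a3 w3 : nat).
Hypothesis n_gt0 : 0 < n.

Lemma mem_window3 p :
  p \in window n 1 a1 w1 ++ window n 2 a2 w2 ++ window n 3 a3 w3 -> 0 < p <= 3 * n.
Proof. by rewrite !mem_cat => /or3P[] /mem_window /(_ n_gt0 isT); lia. Qed.

Lemma uniq_window3 : 0 < a1 -> 0 < a2 -> 0 < a3 -> w1 <= n -> w2 <= n -> w3 <= n ->
  uniq (window n 1 a1 w1 ++ window n 2 a2 w2 ++ window n 3 a3 w3).
Proof.
move=> *; rewrite (uniq_cat_sep (c := n)) ?(uniq_cat_sep (c := 2 * n)) ?uniq_window //.
all: move=> p; first [rewrite mem_cat => /orP[] | idtac].
all: by move=> /mem_window /(_ n_gt0 isT); lia.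
Qed.
End ThreeBlocks.

Section TGrids.
Variables (X : Type) (R : X * X -> X * X) (n i k l : nat).
Hypothesis i_gt0 : 0 < i.

Lemma T12_grid : T12 R n i k l =
  grid (@Rpq X R (3 * n)) (window n 1 (i + k - 1) l) (window n 2 (i + n) k).
Proof.
rewrite -(@window_shift n 1 (i + k) 0 _ l); last lia.
by rewrite -(@window_shift n 2 (i + n) 1 _ k) ?grid_map; last lia.
Qed.

Lemma T13_grid : T13 R n i k l =
  grid (@Rpq X R (3 * n)) (window n 1 (i + k - 1) l) (window n 3 (i + 2 * n) k).
Proof.
rewrite -(@window_shift n 1 (i + k) 0 _ l); last lia.
by rewrite -(@window_shift n 3 (i + 2 * n) 1 _ k) ?grid_map; last lia.
Qed.

Lemma T23_grid : T23 R n i k l =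
  grid (@Rpq X R (3 * n)) (window n 2 (i + n + k - 1) l) (window n 3 (i + 2 * n) k).
Proof.
rewrite -(@window_shift n 2 (i + n + k) 0 _ l); last lia.
by rewrite -(@window_shift n 3 (i + 2 * n) 1 _ k) ?grid_map; last lia.
Qed.
End TGrids.

Theorem mainTheorem11 (X : Type) (R : X * X -> X * X) (n i k l : nat) :
  pentagon_map R ->
  1 < n ->
  1 <= i <= n ->
  1 <= l <= n ->
  1 <= k <= n - l + 1 ->
  forall x : {ffun 'I_(3 * n) -> X},
    T23 R n i k l (T12 R n i k l x) = T12 R n i k l (T13 R n i k l (T23 R n i k l x)).
Proof.
move=> pentR n_gt1 /andP[i_gt0 _] /andP[l_gt0 l_le] /andP[k_gt0 kl_le] x.
have [k' k_def] : exists k', k = k'.+1 by exists k.-1; lia.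
have [l' l_def] : exists l', l = l'.+1 by exists l.-1; lia.
rewrite T12_grid // T13_grid // T23_grid //; subst k l.
have -> : i + n + k'.+1 - 1 = i + n + k' by lia.
rewrite [window n 2 (i + n) _]window_rcons [window n 2 (i + n + k') _]window_cons.
apply: (grid_pentagon (ok := fun p => 0 < p <= 3 * n)).
- exact: Rpq_commute.
- exact: Rpq_pentagon.
- by move=> p; rewrite window_cat_cons; apply: mem_window3; lia.
- by rewrite window_cat_cons; apply: uniq_window3; lia.
Qed.
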